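(* Let $(C,\mathbf A)$, $C\in\mathcal L(\mathcal X,\mathcal Y)$, $\mathbf A=(A_1,\dots,A_d)\in\mathcal L(\mathcal X)^d$, be a contractive pair and let $Q$ be the orthogonal projection of $\mathcal X$ onto $(\operatorname{Ker}\widehat{\mathcal O}_{C,\mathbf A})^\perp$. Then $Q-A_1^*QA_1-\cdots-A_d^*QA_d\ge C^*C$ and $\mathcal G_{C,\mathbf A}\le Q\le I_{\mathcal X}$. Write, with respect to $\mathcal X=\operatorname{Ker}\widehat{\mathcal O}_{C,\mathbf A}\oplus(\operatorname{Ker}\widehat{\mathcal O}_{C,\mathbf A})^\perp$, $$C=\begin{bmatrix}0&C^0\end{bmatrix},\quad A_j=\begin{bmatrix}A_{j1}&A_{j2}\\0&A_j^0\end{bmatrix},\quad Q=\begin{bmatrix}0&0\\0&I\end{bmatrix}\quad(j=1,\dots,d).$$ Then $Q$ satisfies the Stein equation $Q-\sum_{j=1}^dA_j^*QA_j=C^*C$ if and only if $(C^0,\mathbf A^0)=(C^0,(A_1^0,\dots,A_d^0))$ is an isometric pair, in which case also $A_{j2}=0$ (so $(\operatorname{Ker}\widehat{\mathcal O}_{C,\mathbf A})^\perp$ is invariant for $A_j$) for $j=1,\dots,d$.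
   Context: $\mathcal F_d$: free semigroup of words on $\{1,\dots,d\}$; $\mathbf A^v=A_{i_N}\cdots A_{i_1}$ for $v=i_N\cdots i_1$; $\widehat{\mathcal O}_{C,\mathbf A}x=\sum_v(C\mathbf A^vx)z^v\in H^2_{\mathcal Y}(\mathcal F_d)$ (formal power series in noncommuting indeterminates with square-summable coefficients); $\mathcal G_{C,\mathbf A}=\widehat{\mathcal O}_{C,\mathbf A}^*\widehat{\mathcal O}_{C,\mathbf A}=\sum_v(\mathbf A^v)^*C^*C\mathbf A^v$. Contractive pair: $C^*C+\sum_jA_j^*A_j\le I$; isometric pair: equality. *)

From HB Require Import structures.
From mathcomp Require Import all_boot all_order all_algebra.
From mathcomp Require Import complex.
From mathcomp Require Import reals.
Set Implicit Arguments. Unset Strict Implicit. Unset Printing Implicit Defensive.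
Import Order.TTheory GRing.Theory Num.Theory.
Local Open Scope ring_scope.

Definition is_inner_product (R : realType) (X : lmodType R[i])
    (ip : X -> X -> R[i]) : Prop :=
  [/\ (forall (a : R[i]) (x y z : X), ip (a *: x + y) z = a * ip x z + ip y z),
      (forall x y : X, ip y x = (ip x y)^*),
      (forall x : X, 0 <= ip x x) &
      (forall x : X, ip x x = 0 -> x = 0)].

(* completeness w.r.t. the norm ||x|| = sqrt (ip x x), phrased with squared norms *)
Definition ip_complete (R : realType) (X : lmodType R[i])
    (ip : X -> X -> R[i]) : Prop :=
  forall u : nat -> X,
    (forall e : R[i], 0 < e -> exists N : nat, forall m n : nat,
        (N <= m)%N -> (N <= n)%N -> ip (u m - u n) (u m - u n) < e) ->
    exists l : X, forall e : R[i], 0 < e -> exists N : nat, forall n : nat,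
        (N <= n)%N -> ip (u n - l) (u n - l) < e.

Definition is_hilbert (R : realType) (X : lmodType R[i])
    (ip : X -> X -> R[i]) : Prop :=
  is_inner_product ip /\ ip_complete ip.

Definition is_bounded_op (R : realType) (X Y : lmodType R[i])
    (ipX : X -> X -> R[i]) (ipY : Y -> Y -> R[i]) (T : X -> Y) : Prop :=
  (forall (a : R[i]) (x y : X), T (a *: x + y) = a *: T x + T y) /\
  exists M : R[i], 0 <= M /\ forall x : X, ipY (T x) (T x) <= M * ipX x x.

Definition is_adjoint (R : realType) (X Y : lmodType R[i])
    (ipX : X -> X -> R[i]) (ipY : Y -> Y -> R[i]) (T : X -> Y) (Ts : Y -> X) : Prop :=
  forall (x : X) (y : Y), ipY (T x) y = ipX x (Ts y).

(* word v = i_N ... i_1 is the list [:: i_N; ...; i_1];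
   A^v = A_{i_N} ... A_{i_1} *)
Definition word_op (R : realType) (X : lmodType R[i]) (d : nat)
    (A : 'I_d -> X -> X) (v : seq 'I_d) (x : X) : X :=
  foldr (fun i y => A i y) x v.

(* (A^v)^* = A_{i_1}^* ... A_{i_N}^* *)
Definition word_op_adj (R : realType) (X : lmodType R[i]) (d : nat)
    (As : 'I_d -> X -> X) (v : seq 'I_d) (y : X) : X :=
  foldl (fun z i => As i z) y v.

(* Ker \hat O_{C,A} : all coefficients C A^v x of the power series vanish *)
Definition ker_obs (R : realType) (X Y : lmodType R[i]) (d : nat)
    (C : X -> Y) (A : 'I_d -> X -> X) (x : X) : Prop :=
  forall v : seq 'I_d, C (word_op A v x) = 0.

Definition orth_compl (R : realType) (X : lmodType R[i])
    (ip : X -> X -> R[i]) (S : X -> Prop) (x : X) : Prop :=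
  forall y : X, S y -> ip y x = 0.

Definition is_orth_proj (R : realType) (X : lmodType R[i])
    (ip : X -> X -> R[i]) (S : X -> Prop) (P : X -> X) : Prop :=
  forall x : X, S (P x) /\ (forall y : X, S y -> ip (x - P x) y = 0).

Definition gram_partial (R : realType) (X Y : lmodType R[i]) (d : nat)
    (C : X -> Y) (Cs : Y -> X) (A As : 'I_d -> X -> X) (N : nat) (x : X) : X :=
  \sum_(n < N.+1) \sum_(t : n.-tuple 'I_d)
      word_op_adj As (tval t) (Cs (C (word_op A (tval t) x))).

(* G is G_{C,A} = sum_v (A^v)^* C^* C A^v, the series converging strongly *)
Definition is_gramian (R : realType) (X Y : lmodType R[i]) (d : nat)
    (ipX : X -> X -> R[i]) (C : X -> Y) (Cs : Y -> X) (A As : 'I_d -> X -> X)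
    (G : X -> X) : Prop :=
  forall x : X, forall e : R[i], 0 < e -> exists N0 : nat, forall N : nat,
    (N0 <= N)%N ->
    ipX (gram_partial C Cs A As N x - G x) (gram_partial C Cs A As N x - G x) < e.

Definition op_le (R : realType) (X : lmodType R[i]) (ip : X -> X -> R[i])
    (S T : X -> X) : Prop :=
  forall x : X, 0 <= ip (T x - S x) x.

Definition contractive_pair (R : realType) (X Y : lmodType R[i]) (d : nat)
    (ipX : X -> X -> R[i]) (C : X -> Y) (Cs : Y -> X) (A As : 'I_d -> X -> X) : Prop :=
  op_le ipX (fun x => Cs (C x) + \sum_(j < d) As j (A j x)) (fun x => x).

(* Let K be the kernel of the observability operator and Q the projection onto
   K^perp.  K is invariant under every A_j and lies in Ker C, so C = C Q and
   Q A_j = Q A_j Q; contractivity applied to Q x then gives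
   |C x|^2 + sum_j |Q A_j x|^2 <= |Q x|^2, which is the Stein inequality.
   Iterating it along words shows that the partial sums <G_N x, x> of the
   Gramian increase and stay below |Q x|^2.  As 0 <= G_M - G_N <= I implies
   |(G_M - G_N) x|^2 <= <(G_M - G_N) x, x>, the G_N x form a Cauchy sequence,
   whose limit G satisfies G <= Q.
   Compressing the Stein equation by Q gives the isometry of (C^0, A^0).
   Conversely, if (C^0, A^0) is isometric, contractivity at x in K^perp holds
   with equality, which forces (I - Q) A_j x = 0; then for p = Q x the defect
   p - C^*C p - sum_j A_j^* A_j p lies in K^perp and is killed by Q, so it
   vanishes, and this is the Stein equation at x. *)

From HB Require Import structures.
From mathcomp Require Import all_boot all_order all_algebra.
From mathcomp Require Import complex.
From mathcomp Require Import reals.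
From mathcomp Require Import ring lra.
From mathcomp Require Import boolp classical_sets.
Import Order.TTheory GRing.Theory Num.Theory.
Local Open Scope ring_scope.
Set Implicit Arguments.
Unset Strict Implicit.

Section ComplexOrder.
Variable R : realType.

Lemma ge0_complexE (x : R[i]) : 0 <= x -> x = (complex.Re x)%:C%C.
Proof. by move=> /ger0_Im; case: x => a b /= ->. Qed.

Lemma nondecreasing_bounded_cauchy (s : nat -> R[i]) (b : R[i]) :
  (forall n, 0 <= s n) -> (forall m n, (m <= n)%N -> s m <= s n) ->
  (forall n, s n <= b) ->
  forall e, 0 < e -> exists N0, forall m n, (N0 <= m)%N -> (m <= n)%N -> s n - s m < e.
Proof.
move=> s_ge0 s_mono s_le e e_gt0.
pose r n := complex.Re (s n).
have sE n : s n = (r n)%:C%C by apply: ge0_complexE.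
have eE : e = (complex.Re e)%:C%C by apply/ge0_complexE/ltW.
have ReE_gt0 : 0 < complex.Re e by rewrite -ltcR -eE.
pose E : set R := fun y => exists n, r n = y.
have r_le n : r n <= complex.Re b by have := s_le n; rewrite lecE => /andP[].
have supE : has_sup E.
  by split; [exists (r 0%N), 0%N | exists (complex.Re b) => y [n <-]].
have [_ [N0 <-] r_near_sup] := sup_adherent ReE_gt0 supE.
exists N0 => m n N0m mn.
have rn_le : r n <= sup E by apply: sup_upper_bound => //; exists n.
have rN0_le : r N0 <= r m by rewrite -lecR -!sE; apply: s_mono.
rewrite !sE eE -rmorphB ltcR; lra.
Qed.

Lemma approx_ge0 (w : R[i]) :
  (forall e : R[i], 0 < e -> exists r, 0 <= r /\ `|w - r| ^+ 2 <= e) -> 0 <= w.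
Proof.
move=> approx.
have approxR (e : R) : 0 < e -> exists rho : R, 0 <= rho /\
    (complex.Re w - rho) ^+ 2 + (complex.Im w) ^+ 2 <= e.
  move=> e_gt0; have [|r [r_ge0 wr]] := approx e%:C%C; first by rewrite ltcR.
  exists (complex.Re r); split; first by move: r_ge0; rewrite lecE => /andP[].
  move: wr; have Imr := ger0_Im r_ge0.
  case: w {approx} => a b; case: r r_ge0 Imr => c d _ /= ->; simpc.
  by rewrite /Normc.normc -expr2 sqr_sqrtr ?addr_ge0 ?sqr_ge0.
case: w {approx} approxR => a b /= approxR.
have b0 : b = 0.
  apply/eqP/negP => /negP b_neq0.
  have b2_gt0 : 0 < b ^+ 2 by rewrite lt_def sqr_ge0 sqrf_eq0 b_neq0.
  have [|rho [_ ab]] := approxR (b ^+ 2 / 2); first lra.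
  by have := sqr_ge0 (a - rho); nra.
rewrite b0 lecE /= eqxx /= leNgt; apply/negP => a_lt0.
have [|rho [rho_ge0 arho]] := approxR (a ^+ 2 / 2); first nra.
rewrite b0 in arho; nra.
Qed.

End ComplexOrder.

Section TupleSums.
Variables (V : nmodType) (d : nat).

Lemma sum_tuple0 (F : seq 'I_d -> V) : \sum_(t : 0.-tuple 'I_d) F t = F [::].
Proof.
rewrite (eq_bigr (fun _ => F [::])); last by move=> t _; rewrite tuple0.
by rewrite sumr_const card_tuple expn0.
Qed.

Lemma sum_tuple_cons n (F : seq 'I_d -> V) :
  \sum_(t : n.+1.-tuple 'I_d) F t = \sum_(t : n.-tuple 'I_d) \sum_(j < d) F (j :: t).
Proof.
rewrite exchange_big pair_big /=.
rewrite (reindex (fun p : 'I_d * n.-tuple 'I_d => [tuple of p.1 :: p.2])) //=.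
exists (fun t : n.+1.-tuple 'I_d => (thead t, [tuple of behead t])).
  by case=> j t _ /=; congr pair; apply: val_inj.
by move=> t _; apply: val_inj; rewrite /= [in RHS](tuple_eta t).
Qed.

End TupleSums.

Section InnerProduct.
Variables (R : realType) (V : lmodType R[i]) (ip : V -> V -> R[i]).
Hypothesis hip : is_inner_product ip.

Lemma ipDl x y z : ip (x + y) z = ip x z + ip y z.
Proof. by have [ipl _ _ _] := hip; have := ipl 1 x y z; rewrite scale1r mul1r. Qed.

Lemma ip0l z : ip 0 z = 0.
Proof. by apply: (addrI (ip 0 z)); rewrite -ipDl !addr0. Qed.

Lemma ipZl a x z : ip (a *: x) z = a * ip x z.
Proof. by have [ipl _ _ _] := hip; have := ipl a x 0 z; rewrite !addr0 ip0l addr0. Qed.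

Lemma ipNl x z : ip (- x) z = - ip x z.
Proof. by rewrite -scaleN1r ipZl mulN1r. Qed.

Lemma ipBl x y z : ip (x - y) z = ip x z - ip y z.
Proof. by rewrite ipDl ipNl. Qed.

Lemma ip_conj x y : ip y x = (ip x y)^*.
Proof. by have [_ ipc _ _] := hip. Qed.

Lemma ipDr x y z : ip z (x + y) = ip z x + ip z y.
Proof. by rewrite [LHS]ip_conj ipDl rmorphD [ip z x]ip_conj [ip z y]ip_conj. Qed.

Lemma ip0r z : ip z 0 = 0.
Proof. by rewrite ip_conj ip0l rmorph0. Qed.

Lemma ipZr a x z : ip z (a *: x) = a^* * ip z x.
Proof. by rewrite [LHS]ip_conj ipZl rmorphM [ip z x]ip_conj. Qed.

Lemma ipNr x z : ip z (- x) = - ip z x.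
Proof. by rewrite [LHS]ip_conj ipNl rmorphN [ip z x]ip_conj. Qed.

Lemma ipBr x y z : ip z (x - y) = ip z x - ip z y.
Proof. by rewrite ipDr ipNr. Qed.

Lemma ip_suml I (r : seq I) (P : pred I) (F : I -> V) z :
  ip (\sum_(i <- r | P i) F i) z = \sum_(i <- r | P i) ip (F i) z.
Proof. by elim/big_rec2: _ => [|i a b _ <-]; [exact: ip0l | rewrite ipDl]. Qed.

Lemma ip_sumr I (r : seq I) (P : pred I) (F : I -> V) z :
  ip z (\sum_(i <- r | P i) F i) = \sum_(i <- r | P i) ip z (F i).
Proof. by elim/big_rec2: _ => [|i a b _ <-]; [exact: ip0r | rewrite ipDr]. Qed.

Lemma ip_ge0 x : 0 <= ip x x.
Proof. by have [_ _ ip_pos _] := hip. Qed.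

Lemma ip_eq0 x : ip x x = 0 -> x = 0.
Proof. by have [_ _ _ ip_def] := hip; apply: ip_def. Qed.

Lemma ip_normN x : ip (- x) (- x) = ip x x.
Proof. by rewrite ipNl ipNr opprK. Qed.

Lemma ip_injl u w : (forall z, ip u z = ip w z) -> u = w.
Proof. by move=> uw; apply/eqP; rewrite -subr_eq0; apply/eqP/ip_eq0; rewrite ipBl uw subrr. Qed.

Lemma ip_pythagoras p k : ip p k = 0 -> ip (p + k) (p + k) = ip p p + ip k k.
Proof. by move=> pk; rewrite ipDl !ipDr pk [ip k p]ip_conj pk rmorph0 addr0 add0r. Qed.

Lemma ip_cauchy_schwarz z x : `|ip z x| ^+ 2 <= ip z z * ip x x.
Proof.
have [->|x_neq0] := eqVneq x 0; first by rewrite ip0r normr0 expr0n /= ip0l mulr0.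
have nx_gt0 : 0 < ip x x.
  by rewrite lt_def ip_ge0 andbT; apply/eqP => /ip_eq0; apply/eqP.
have conjM (a b : R[i]) : (a * b)^* = a^* * b^* := rmorphM _ a b.
have conjV (a : R[i]) : (a^-1)^* = (a^*)^-1 := fmorphV _ a.
set c := ip z x; set n := ip x x.
have := ip_ge0 (z - (c / n) *: x).
rewrite ipBl !ipBr !ipZl !ipZr -/c -/n [ip x z]ip_conj -/c conjM conjV.
rewrite -[n^*]ip_conj -/n normCK -ler_pdivrMr //.
have -> : ip z z - c^* / n * c - (c / n * c^* - c / n * (c^* / n * n)) =
          ip z z - c * c^* / n by field; apply: lt0r_neq0.
by rewrite subr_ge0.
Qed.

Definition ip_cvg (u : nat -> V) (l : V) :=
  forall e : R[i], 0 < e -> exists N0 : nat, forall N : nat,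
    (N0 <= N)%N -> ip (u N - l) (u N - l) < e.

Lemma ip_ge0_cvg (u : nat -> V) l x :
  (forall N, 0 <= ip (u N) x) -> ip_cvg u l -> 0 <= ip l x.
Proof.
move=> u_ge0 ul; apply: approx_ge0 => e e_gt0.
set n := ip x x; have n_ge0 : 0 <= n := ip_ge0 x.
have n1_gt0 : 0 < 1 + n := ltr_wpDr n_ge0 ltr01.
have [N uNl] := ul _ (divr_gt0 e_gt0 n1_gt0).
exists (ip (u N) x); split => //.
rewrite -ipBl; apply: le_trans (ip_cauchy_schwarz _ _) _.
rewrite -opprB ip_normN; apply: le_trans (ler_wpM2r n_ge0 (ltW (uNl N _))) _ => //.
rewrite -[leRHS](divfK (lt0r_neq0 n1_gt0)) ler_wpM2l ?lerDr ?ler01 //.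
exact/ltW/divr_gt0.
Qed.

Lemma selfadjoint_sq_le (T : V -> V) :
  (forall y z, T (y - z) = T y - T z) ->
  (forall y z, ip (T y) z = ip y (T z)) ->
  (forall y, 0 <= ip (T y) y) -> (forall y, ip (T y) y <= ip y y) ->
  forall x, ip (T x) (T x) <= ip (T x) x.
Proof.
move=> TB Tsym T_ge0 T_le x.
have := T_ge0 (x - T x); rewrite TB !ipBl !ipBr [ip (T (T x)) x]Tsym.
set b := ip (T x) (T x); set c := ip (T (T x)) (T x).
have c_le_b : 0 <= b - c by rewrite subr_ge0 T_le.
by rewrite subr_ge0 => ab; rewrite -subr_ge0; apply: le_trans ab.
Qed.

Lemma orth_compl_lin (S : V -> Prop) a x y :
  orth_compl ip S x -> orth_compl ip S y -> orth_compl ip S (a *: x + y).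
Proof. by move=> Sx Sy k Sk; rewrite ipDr ipZr Sx // Sy // mulr0 addr0. Qed.

Lemma orth_complB (S : V -> Prop) x y :
  orth_compl ip S x -> orth_compl ip S y -> orth_compl ip S (x - y).
Proof. by move=> Sx Sy k Sk; rewrite ipBr Sx // Sy // subrr. Qed.

Lemma orth_compl0 (S : V -> Prop) : orth_compl ip S 0.
Proof. by move=> k _; rewrite ip0r. Qed.

Lemma orth_compl_le_id (S : V -> Prop) (Q : V -> V) :
  is_orth_proj ip (orth_compl ip S) Q -> op_le ip Q (fun x => x).
Proof.
move=> hQ x; have [Qx_orth xQx_orth] := hQ x.
have -> : ip (x - Q x) x = ip (x - Q x) (x - Q x) + ip (x - Q x) (Q x).
  by rewrite -ipDr subrK.
by rewrite (xQx_orth _ Qx_orth) addr0 ip_ge0.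
Qed.

End InnerProduct.

Section LinearMaps.
Variables (R : realType) (U W : lmodType R[i]) (T : U -> W).
Hypothesis T_lin : forall (a : R[i]) x y, T (a *: x + y) = a *: T x + T y.

Lemma linD x y : T (x + y) = T x + T y.
Proof. by have := T_lin 1 x y; rewrite !scale1r. Qed.

Lemma lin0 : T 0 = 0.
Proof. by apply: (addrI (T 0)); rewrite -linD !addr0. Qed.

Lemma linN x : T (- x) = - T x.
Proof. by have := T_lin (-1) x 0; rewrite !addr0 lin0 addr0 !scaleN1r. Qed.

Lemma linB x y : T (x - y) = T x - T y.
Proof. by rewrite linD linN. Qed.

Lemma lin_sum I (r : seq I) (P : pred I) (F : I -> U) :
  T (\sum_(i <- r | P i) F i) = \sum_(i <- r | P i) T (F i).
Proof. by elim/big_rec2: _ => [|i a b _ <-]; [exact: lin0 | exact: linD]. Qed.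

End LinearMaps.

Section OrthogonalProjection.
Variables (R : realType) (V : lmodType R[i]) (ip : V -> V -> R[i]).
Hypothesis hip : is_inner_product ip.
Variable S : V -> Prop.
Hypotheses (S0 : S 0) (S_lin : forall a x y, S x -> S y -> S (a *: x + y))
  (S_closed : forall z, orth_compl ip (orth_compl ip S) z -> S z).
Variable Q : V -> V.
Hypothesis hQ : is_orth_proj ip (orth_compl ip S) Q.
Local Notation Sp := (orth_compl ip S).

Lemma proj_range x : Sp (Q x).
Proof. by have [] := hQ x. Qed.

Lemma proj_compl x : S (x - Q x).
Proof.
apply: S_closed => y Sp_y; have [_ xQx_orth] := hQ x.
by rewrite (ip_conj hip) xQx_orth // rmorph0.
Qed.

Lemma orth_compl_meet0 x : S x -> Sp x -> x = 0.
Proof. by move=> Sx Sp_x; apply: (ip_eq0 hip); apply: Sp_x. Qed.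

Lemma proj_uniq x y : Sp y -> S (x - y) -> Q x = y.
Proof.
move=> Sp_y Sxy; apply/eqP; rewrite -subr_eq0; apply/eqP/orth_compl_meet0.
  have -> : Q x - y = - 1 *: (x - Q x) + (x - y).
    by rewrite scaleN1r opprB addrA subrK.
  exact/S_lin/Sxy/proj_compl.
exact/(orth_complB hip)/Sp_y/proj_range.
Qed.

Lemma proj_lin a x y : Q (a *: x + y) = a *: Q x + Q y.
Proof.
apply: proj_uniq; first by apply/(orth_compl_lin hip)/proj_range/proj_range.
have -> : a *: x + y - (a *: Q x + Q y) = a *: (x - Q x) + (y - Q y).
  by rewrite scalerBr opprD !addrA; congr (_ + _); rewrite addrAC.
exact/S_lin/proj_compl/proj_compl.
Qed.

Lemma proj_id x : Sp x -> Q x = x.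
Proof. by move=> Sp_x; apply: proj_uniq; rewrite ?subrr. Qed.

Lemma proj_ker x : S x -> Q x = 0.
Proof. by move=> Sx; apply: proj_uniq; [apply: (orth_compl0 hip) | rewrite subr0]. Qed.

Lemma proj_idem x : Q (Q x) = Q x.
Proof. exact/proj_id/proj_range. Qed.

Lemma ip_projl x y : ip (Q x) y = ip (Q x) (Q y).
Proof.
rewrite -{1}(subrK (Q y) y) (ipDr hip).
by rewrite [ip _ (y - _)](ip_conj hip) (proj_range x (proj_compl y)) rmorph0 add0r.
Qed.

Lemma ip_proj_sym x y : ip (Q x) y = ip x (Q y).
Proof. by rewrite ip_projl [RHS](ip_conj hip) [ip (Q y) x]ip_projl -(ip_conj hip). Qed.

Lemma ip_proj_split x : ip x x = ip (Q x) (Q x) + ip (x - Q x) (x - Q x).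
Proof.
have -> : ip x x = ip (Q x + (x - Q x)) (Q x + (x - Q x)) by rewrite addrC subrK.
by rewrite (ip_pythagoras hip) // (ip_conj hip) (proj_range x (proj_compl x)) rmorph0.
Qed.

Lemma ip_proj_le x : ip (Q x) (Q x) <= ip x x.
Proof. by rewrite [leRHS]ip_proj_split lerDl (ip_ge0 hip). Qed.

Lemma proj_factor (W : lmodType R[i]) (T : V -> W) :
  (forall y z, T (y + z) = T y + T z) -> (forall z, S z -> T z = 0) ->
  forall x, T x = T (Q x).
Proof. by move=> TD T_S x; rewrite -{1}(subrK (Q x) x) TD (T_S _ (proj_compl x)) add0r. Qed.

End OrthogonalProjection.

Section Observability.
Variables (R : realType) (X Y : lmodType R[i])
  (ipX : X -> X -> R[i]) (ipY : Y -> Y -> R[i]).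
Hypotheses (hipX : is_inner_product ipX) (hipY : is_inner_product ipY).
Variables (d : nat) (C : X -> Y) (Cs : Y -> X) (A As : 'I_d -> X -> X).
Hypotheses (C_lin : forall a x y, C (a *: x + y) = a *: C x + C y)
  (A_lin : forall j a x y, A j (a *: x + y) = a *: A j x + A j y)
  (hCs : is_adjoint ipX ipY C Cs) (hAs : forall j, is_adjoint ipX ipX (A j) (As j)).
Local Notation K := (ker_obs C A).
Local Notation Kp := (orth_compl ipX (ker_obs C A)).

Lemma ip_adjCl x y : ipX (Cs y) x = ipY y (C x).
Proof. by rewrite (ip_conj hipX) -hCs -(ip_conj hipY). Qed.

Lemma ip_adjAl j x y : ipX (As j y) x = ipX y (A j x).
Proof. by rewrite (ip_conj hipX) -hAs -(ip_conj hipX). Qed.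

Lemma word_op_rcons v j x : word_op A (rcons v j) x = word_op A v (A j x).
Proof. by rewrite /word_op foldr_rcons. Qed.

Lemma word_op_lin v a x y :
  word_op A v (a *: x + y) = a *: word_op A v x + word_op A v y.
Proof. by elim: v => [//|j v IHv] /=; rewrite -A_lin -IHv. Qed.

Lemma C_word_op_lin v a x y :
  C (word_op A v (a *: x + y)) = a *: C (word_op A v x) + C (word_op A v y).
Proof. by rewrite word_op_lin C_lin. Qed.

Lemma ip_word_op_adj v x y : ipX x (word_op_adj As v y) = ipX (word_op A v x) y.
Proof.
elim: v x y => [//|j v IHv] x y.
by rewrite /word_op_adj /= -/(word_op_adj As v (As j y)) IHv -hAs.
Qed.

Lemma ip_word_op_adjl v x y : ipX (word_op_adj As v y) x = ipX y (word_op A v x).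
Proof. by rewrite (ip_conj hipX) ip_word_op_adj -(ip_conj hipX). Qed.

Lemma ker_obs0 : K 0.
Proof. by move=> v; rewrite (lin0 (word_op_lin v)) (lin0 C_lin). Qed.

Lemma ker_obs_lin a x y : K x -> K y -> K (a *: x + y).
Proof. by move=> Kx Ky v; rewrite C_word_op_lin Kx Ky scaler0 addr0. Qed.

Lemma ker_obsA j x : K x -> K (A j x).
Proof. by move=> Kx v; rewrite -word_op_rcons. Qed.

Lemma ker_obsC x : K x -> C x = 0.
Proof. exact: (@^~ [::]). Qed.

Lemma ker_obs_closed z : orth_compl ipX Kp z -> K z.
Proof.
(* (A^v)^* C^* C A^v z lies in K^perp, and its inner product with z is |C A^v z|^2. *)
move=> z_orth v; apply: (ip_eq0 hipY); rewrite hCs -ip_word_op_adj.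
rewrite (ip_conj hipX) z_orth ?rmorph0 // => k Kk.
by rewrite ip_word_op_adj -hCs (Kk v) (ip0l hipY).
Qed.

Variable Q : X -> X.
Hypotheses (hQ : is_orth_proj ipX Kp Q) (hcontr : contractive_pair ipX C Cs A As)
  (hXc : ip_complete ipX).
Local Notation nX x := (ipX x x).
Local Notation nY y := (ipY y y).
Local Notation gp N x := (gram_partial C Cs A As N x).

Let Q_lin := proj_lin hipX ker_obs_lin ker_obs_closed hQ.
Let Q_ker := proj_ker hipX ker_obs_lin ker_obs_closed hQ.
Let Q_id := proj_id hipX ker_obs0 ker_obs_lin ker_obs_closed hQ.
Let Q_idem := proj_idem hipX ker_obs0 ker_obs_lin ker_obs_closed hQ.
Let Q_factor := proj_factor hipX ker_obs_closed hQ.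
Let ipQl := ip_projl hipX ker_obs_closed hQ.
Let ipQ_sym := ip_proj_sym hipX ker_obs_closed hQ.
Let ipQ_split := ip_proj_split hipX ker_obs_closed hQ.
Let ipQ_le := ip_proj_le hipX ker_obs_closed hQ.

Lemma C_proj x : C x = C (Q x).
Proof. exact: (Q_factor (linD C_lin) ker_obsC). Qed.

Lemma proj_A_proj j x : Q (A j x) = Q (A j (Q x)).
Proof.
apply: (Q_factor (T := fun y => Q (A j y))) => [y z|z Kz].
  by rewrite (linD (A_lin j)) (linD Q_lin).
by rewrite Q_ker //; apply: ker_obsA.
Qed.

Lemma contractive_pair_norm x : nY (C x) + \sum_(j < d) nX (A j x) <= nX x.
Proof.
have := hcontr x; rewrite (ipBl hipX) (ipDl hipX) (ip_suml hipX) subr_ge0.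
by rewrite ip_adjCl; under eq_bigr do rewrite ip_adjAl.
Qed.

Lemma contractive_pair_proj_norm x :
  nY (C x) + \sum_(j < d) nX (Q (A j x)) <= nX (Q x).
Proof.
rewrite C_proj; under eq_bigr do rewrite proj_A_proj.
apply: le_trans (contractive_pair_norm (Q x)); rewrite lerD2l.
by apply: ler_sum => j _; apply: ipQ_le.
Qed.

Lemma stein_inequality :
  op_le ipX (fun x => Cs (C x)) (fun x => Q x - \sum_(j < d) As j (Q (A j x))).
Proof.
move=> x; rewrite !(ipBl hipX) (ip_suml hipX) ip_adjCl.
rewrite ipQl.
under eq_bigr do rewrite ip_adjAl ipQl.
by rewrite -addrA -opprD subr_ge0 addrC contractive_pair_proj_norm.
Qed.

Definition gram_form N y z := \sum_(n < N.+1) \sum_(t : n.-tuple 'I_d)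
  ipY (C (word_op A t y)) (C (word_op A t z)).

Definition proj_tail n x := \sum_(t : n.-tuple 'I_d) nX (Q (word_op A t x)).

Lemma proj_tail_step n x :
  \sum_(t : n.-tuple 'I_d) nY (C (word_op A t x)) + proj_tail n.+1 x <= proj_tail n x.
Proof.
rewrite /proj_tail (sum_tuple_cons n (fun s => nX (Q (word_op A s x)))) -big_split.
by apply: ler_sum => t _; apply: contractive_pair_proj_norm.
Qed.

Lemma gram_form_add_tail_le N x : gram_form N x x + proj_tail N.+1 x <= nX (Q x).
Proof.
elim: N => [|N IHN].
  rewrite /gram_form big_ord1.
  by rewrite -[leRHS](sum_tuple0 (fun s => nX (Q (word_op A s x)))) proj_tail_step.
apply: le_trans IHN; rewrite /gram_form big_ord_recr /= -addrA lerD2l.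
exact: proj_tail_step.
Qed.

Lemma gram_form_ge0 N x : 0 <= gram_form N x x.
Proof. by apply: sumr_ge0 => n _; apply: sumr_ge0 => t _; apply: (ip_ge0 hipY). Qed.

Lemma gram_form_le_proj N x : gram_form N x x <= nX (Q x).
Proof.
apply: le_trans (gram_form_add_tail_le N x); rewrite lerDl.
by apply: sumr_ge0 => t _; apply: (ip_ge0 hipX).
Qed.

Lemma gram_form_mono N M x : (N <= M)%N -> gram_form N x x <= gram_form M x x.
Proof.
move/subnK => <-; elim: (M - N)%N => [//|k IHk]; apply: le_trans IHk _.
rewrite addSn /gram_form [leRHS]big_ord_recr /= lerDl.
by apply: sumr_ge0 => t _; apply: (ip_ge0 hipY).
Qed.

Lemma ip_gram_partial N y z : ipX (gp N y) z = gram_form N y z.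
Proof.
rewrite /gram_partial (ip_suml hipX); apply: eq_bigr => n _.
rewrite (ip_suml hipX); apply: eq_bigr => t _.
by rewrite ip_word_op_adjl ip_adjCl.
Qed.

Lemma gram_form_conj N y z : gram_form N z y = (gram_form N y z)^*.
Proof.
rewrite rmorph_sum; apply: eq_bigr => n _.
by rewrite rmorph_sum; apply: eq_bigr => t _; apply: (ip_conj hipY).
Qed.

Lemma gram_formBl N y y' z : gram_form N (y - y') z = gram_form N y z - gram_form N y' z.
Proof.
rewrite -sumrB; apply: eq_bigr => n _; rewrite -sumrB; apply: eq_bigr => t _.
by rewrite (linB (C_word_op_lin t)) (ipBl hipY).
Qed.

Lemma gram_partialB N y y' : gp N (y - y') = gp N y - gp N y'.
Proof.
by apply: (ip_injl hipX) => z; rewrite (ipBl hipX) !ip_gram_partial gram_formBl.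
Qed.

Lemma gram_partial_selfadjoint N y z : ipX (gp N y) z = ipX y (gp N z).
Proof.
by rewrite ip_gram_partial [RHS](ip_conj hipX) ip_gram_partial gram_form_conj.
Qed.

Lemma gram_partial_cauchy N M x : (N <= M)%N ->
  nX (gp M x - gp N x) <= gram_form M x x - gram_form N x x.
Proof.
move=> NM; pose T y := gp M y - gp N y.
have TE y : ipX (T y) y = gram_form M y y - gram_form N y y.
  by rewrite (ipBl hipX) !ip_gram_partial.
rewrite -TE; apply: (selfadjoint_sq_le hipX (T := T)) => [y z|y z|y|y].
- by rewrite /T !gram_partialB !opprB addrACA [RHS]addrACA [- gp N y + _]addrC.
- by rewrite (ipBl hipX) (ipBr hipX) !gram_partial_selfadjoint.
- by rewrite TE subr_ge0 gram_form_mono.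
rewrite TE; apply: le_trans (_ : _ <= gram_form M y y) _.
  by rewrite gerBl gram_form_ge0.
exact: le_trans (gram_form_le_proj M y) (ipQ_le y).
Qed.

Lemma gram_partial_cvg x : exists l, ip_cvg ipX (fun N => gp N x) l.
Proof.
apply: hXc => e e_gt0.
have [N0 gram_cauchy] := nondecreasing_bounded_cauchy (gram_form_ge0 ^~ x)
  (fun m n mn => gram_form_mono x mn)
  (fun n => le_trans (gram_form_le_proj n x) (ipQ_le x)) e_gt0.
exists N0 => m n N0m N0n; case: (leqP m n) => [mn|nm].
  rewrite -opprB (ip_normN hipX); apply: le_lt_trans (gram_partial_cauchy x mn) _.
  exact: gram_cauchy.
apply: le_lt_trans (gram_partial_cauchy x (ltnW nm)) _.
exact: gram_cauchy (ltnW nm).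
Qed.

Lemma gramian_exists : exists G, is_gramian ipX C Cs A As G.
Proof. by have [G hG] := boolp.choice gram_partial_cvg; exists G. Qed.

Lemma gramian_le_proj G : is_gramian ipX C Cs A As G -> op_le ipX G Q.
Proof.
move=> hG x; apply: (ip_ge0_cvg hipX (u := fun N => Q x - gp N x)) => [N|e].
  rewrite (ipBl hipX) ip_gram_partial ipQl subr_ge0.
  exact: gram_form_le_proj.
move=> /(hG x)[N0 gram_near]; exists N0 => N /gram_near.
by rewrite opprB [_ + (G x - _)]addrC addrA subrK -opprB (ip_normN hipX).
Qed.

Definition stein_identity :=
  forall x, Q x - \sum_(j < d) As j (Q (A j x)) = Cs (C x).

Definition compression_isometric :=
  forall x, Kp x -> Q (Cs (C x)) + \sum_(j < d) Q (As j (Q (A j x))) = x.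

Lemma stein_compression_isometric : stein_identity -> compression_isometric.
Proof.
move=> stein x Kp_x; have := f_equal Q (stein x).
rewrite (linB Q_lin) (lin_sum Q_lin) Q_idem Q_id // => <-.
by rewrite subrK.
Qed.

Lemma compression_isometric_invariant :
  compression_isometric -> forall j x, Kp x -> A j x - Q (A j x) = 0.
Proof.
move=> isom j x Kp_x.
have norm_x : nY (C x) + \sum_(j < d) nX (Q (A j x)) = nX x.
  have := f_equal (ipX^~ x) (isom x Kp_x).
  rewrite /= (ipDl hipX) (ip_suml hipX) ipQ_sym (Q_id Kp_x) ip_adjCl => <-.
  congr (_ + _); apply: eq_bigr => i _.
  by rewrite [RHS]ipQ_sym (Q_id Kp_x) ip_adjAl [RHS]ipQl.
have := contractive_pair_norm x.
under eq_bigr do rewrite ipQ_split.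
rewrite big_split /= -norm_x addrA gerDl => defect_le0.
have defect0 : \sum_(i < d) nX (A i x - Q (A i x)) = 0.
  by apply/le_anti; rewrite defect_le0 sumr_ge0 // => i _; apply: (ip_ge0 hipX).
apply: (ip_eq0 hipX); move/psumr_eq0P: defect0; apply=> // i _.
exact: (ip_ge0 hipX).
Qed.

Lemma compression_isometric_stein : compression_isometric -> stein_identity.
Proof.
move=> isom x; set p := Q x.
have Kp_p : Kp p := proj_range hQ x.
have QA_p j : Q (A j p) = A j p.
  by apply/esym/eqP; rewrite -subr_eq0; apply/eqP/compression_isometric_invariant.
under eq_bigr do rewrite proj_A_proj -/p QA_p.
rewrite C_proj -/p; set T := p - Cs (C p) - \sum_(j < d) As j (A j p).
have Kp_T : Kp T.
  move=> k Kk; rewrite !(ipBr hipX) (ip_sumr hipX) -hCs (ker_obsC Kk) (ip0l hipY).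
  rewrite (Kp_p k Kk) subr0 big1 ?subr0 // => j _.
  by rewrite -hAs -QA_p (proj_range hQ) //; apply: ker_obsA.
have QT : Q T = 0.
  rewrite /T !(linB Q_lin) (lin_sum Q_lin) Q_idem.
  under eq_bigr do rewrite -{1}QA_p.
  by rewrite -addrA -opprD (isom p Kp_p) subrr.
have T0 : T = 0 by rewrite -QT Q_id.
by apply/eqP; rewrite -subr_eq0 addrAC -/T T0.
Qed.

End Observability.

Unset Implicit Arguments.

Theorem proposition2p12
  (R : realType) (X Y : lmodType R[i])
  (ipX : X -> X -> R[i]) (ipY : Y -> Y -> R[i])
  (hX : is_hilbert ipX) (hY : is_hilbert ipY)
  (d : nat) (C : X -> Y) (Cs : Y -> X) (A As : 'I_d -> X -> X)
  (hC : is_bounded_op ipX ipY C) (hCs : is_adjoint ipX ipY C Cs)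
  (hA : forall j, is_bounded_op ipX ipX (A j))
  (hAs : forall j, is_adjoint ipX ipX (A j) (As j))
  (hcontr : contractive_pair ipX C Cs A As)
  (Q : X -> X)
  (hQ : is_orth_proj ipX (orth_compl ipX (ker_obs C A)) Q) :
  (* Q - sum_j A_j^* Q A_j >= C^* C *)
  op_le ipX (fun x => Cs (C x)) (fun x => Q x - \sum_(j < d) As j (Q (A j x)))
  (* G_{C,A} <= Q <= I *)
  /\ (exists G : X -> X, is_gramian ipX C Cs A As G /\ op_le ipX G Q)
  /\ op_le ipX Q (fun x => x)
  (* Stein equation <-> (C^0, A^0) isometric pair on (Ker O)^perp:
     (C^0)^* C^0 + sum_j (A_j^0)^* A_j^0 = I, with C^0 = C|, A_j^0 = Q A_j|,
     (C^0)^* = Q C^*, (A_j^0)^* = Q A_j^*|  *)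
  /\ ((forall x : X, Q x - \sum_(j < d) As j (Q (A j x)) = Cs (C x)) <->
      (forall x : X, orth_compl ipX (ker_obs C A) x ->
         Q (Cs (C x)) + \sum_(j < d) Q (As j (Q (A j x))) = x))
  (* in which case A_{j2} = (I - Q) A_j | = 0 *)
  /\ ((forall x : X, Q x - \sum_(j < d) As j (Q (A j x)) = Cs (C x)) ->
      forall (j : 'I_d) (x : X), orth_compl ipX (ker_obs C A) x ->
         A j x - Q (A j x) = 0).
Proof.
have [[hipX hXc] [hipY _]] := (hX, hY).
have C_lin := hC.1; have A_lin j := (hA j).1.
have stein_isom := stein_compression_isometric hipX hipY C_lin A_lin hCs hAs hQ.
split; first exact: (stein_inequality hipX hipY C_lin A_lin hCs hAs hQ hcontr).
split.
  have [G hG] := gramian_exists hipX hipY C_lin A_lin hCs hAs hQ hcontr hXc.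
  by exists G; split=> //; apply: (gramian_le_proj hipX hipY C_lin A_lin hCs hAs hQ hcontr).
split; first exact: (orth_compl_le_id hipX hQ).
split.
  split=> //; exact: (compression_isometric_stein hipX hipY C_lin A_lin hCs hAs hQ hcontr).
move=> /stein_isom.
exact: (compression_isometric_invariant hipX hipY C_lin A_lin hCs hAs hQ hcontr).
Qed.
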